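(* Let $d \geq 2$, $N, K \geq 1$ be integers, $\mathbf{y}_1,\ldots,\mathbf{y}_N \in \mathbb{R}^d$ with matrix $\mathbf{Y} = [\mathbf{y}_1,\ldots,\mathbf{y}_N]$, and $\rho_k^{[i]} \geq 0$ with $\sum_{k=1}^K \rho_k^{[i]} = 1$ for each $i$. Put $\mathbf{A}_k = \sum_{i} \rho_k^{[i]}\mathbf{y}_i\mathbf{y}_i^\mathrm{T}$, $\gamma_k = \sum_i \rho_k^{[i]}$, $\lambda_k = $ largest eigenvalue of $\mathbf{A}_k$. For $S \subseteq [K]$ define $\sigma^2(S) = \big(\|\mathbf{Y}\|_\mathrm{F}^2 - \sum_{k\in S}\lambda_k\big)/\big(dN - \sum_{k\in S}\gamma_k\big)$ and $g(S) = \big[dN - \sum_{k\in S}\gamma_k\big]\ln\sigma^2(S) + \sum_{k\in S}\gamma_k\ln(\lambda_k/\gamma_k)$, and assume $\gamma_k>0$, $\lambda_k>0$ for all $k$ and $\sigma^2(S)>0$ for all $S\subseteq[K]$. Let $\mathcal{V} = \{S \subseteq [K] : \sigma^2(S) \leq \lambda_k/\gamma_k \text{ for all } k\in S\}$. Consider the procedure: start with $S = \emptyset$; while the set $L = \{k \in [K]\setminus S : \sigma^2(S) \leq \lambda_k/\gamma_k\}$ is nonempty, choose any $k^\star \in L$ and replace $S$ by $S\cup\{k^\star\}$. Then this procedure terminates, every set $S$ it produces lies in $\mathcal{V}$, and its output is the unique saturated set (a set $S\in\mathcal{V}$ with $\sigma^2(S) > \lambda_j/\gamma_j$ for all $j \notin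 S$), which is a minimizer of $g$ over $\mathcal{V}$.
   Context: $[K] = \{1,\ldots,K\}$; $\|\cdot\|_\mathrm{F}$ is the Frobenius norm. *)

From HB Require Import structures.
From mathcomp Require Import all_boot all_order all_algebra.
From mathcomp Require Import reals exp.
Set Implicit Arguments. Unset Strict Implicit. Unset Printing Implicit Defensive.
Import Order.TTheory GRing.Theory Num.Theory.
Local Open Scope ring_scope.

Definition dataY (R : realType) (d N : nat) (y : 'I_N -> 'cV[R]_d) : 'M[R]_(d, N) :=
  \matrix_(a < d, i < N) y i a 0.

Definition frob2 (R : realType) (m n : nat) (M : 'M[R]_(m, n)) : R :=
  \sum_(a < m) \sum_(b < n) M a b ^+ 2.

Definition Amat (R : realType) (d N K : nat) (y : 'I_N -> 'cV[R]_d)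
  (rho : 'I_K -> 'I_N -> R) (k : 'I_K) : 'M[R]_d :=
  \sum_(i < N) rho k i *: (y i *m (y i)^T).

Definition gam (R : realType) (N K : nat) (rho : 'I_K -> 'I_N -> R) (k : 'I_K) : R :=
  \sum_(i < N) rho k i.

Definition is_largest_eigenvalue (R : realType) (n : nat) (A : 'M[R]_n) (l : R) : Prop :=
  eigenvalue A l /\ (forall mu : R, eigenvalue A mu -> mu <= l).

Definition sigma2 (R : realType) (d N K : nat) (y : 'I_N -> 'cV[R]_d)
  (rho : 'I_K -> 'I_N -> R) (lam : 'I_K -> R) (S : {set 'I_K}) : R :=
  (frob2 (dataY y) - \sum_(k in S) lam k) /
  ((d * N)%:R - \sum_(k in S) gam rho k).

Definition gfun (R : realType) (d N K : nat) (y : 'I_N -> 'cV[R]_d)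
  (rho : 'I_K -> 'I_N -> R) (lam : 'I_K -> R) (S : {set 'I_K}) : R :=
  ((d * N)%:R - \sum_(k in S) gam rho k) * ln (sigma2 y rho lam S)
  + \sum_(k in S) gam rho k * ln (lam k / gam rho k).

Definition inV (R : realType) (d N K : nat) (y : 'I_N -> 'cV[R]_d)
  (rho : 'I_K -> 'I_N -> R) (lam : 'I_K -> R) (S : {set 'I_K}) : Prop :=
  forall k, k \in S -> sigma2 y rho lam S <= lam k / gam rho k.

Definition saturated (R : realType) (d N K : nat) (y : 'I_N -> 'cV[R]_d)
  (rho : 'I_K -> 'I_N -> R) (lam : 'I_K -> R) (S : {set 'I_K}) : Prop :=
  inV y rho lam S /\ (forall j, j \notin S -> lam j / gam rho j < sigma2 y rho lam S).

Definition candL (R : realType) (d N K : nat) (y : 'I_N -> 'cV[R]_d)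
  (rho : 'I_K -> 'I_N -> R) (lam : 'I_K -> R) (S : {set 'I_K}) : {set 'I_K} :=
  [set k | (k \notin S) && (sigma2 y rho lam S <= lam k / gam rho k)].

Definition step (R : realType) (d N K : nat) (y : 'I_N -> 'cV[R]_d)
  (rho : 'I_K -> 'I_N -> R) (lam : 'I_K -> R) (S S' : {set 'I_K}) : Prop :=
  exists2 k, k \in candL y rho lam S & S' = k |: S.

Inductive reachable (R : realType) (d N K : nat) (y : 'I_N -> 'cV[R]_d)
  (rho : 'I_K -> 'I_N -> R) (lam : 'I_K -> R) : {set 'I_K} -> Prop :=
| reach0 : reachable y rho lam set0
| reachS S S' : reachable y rho lam S -> step y rho lam S S' -> reachable y rho lam S'.

(* Adding to S a disjoint set A changes sigma by a quantity with the sign of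
   sum_(j in A) (sigma(S) gamma_j - lambda_j).  So a greedy step never raises
   sigma and the produced sets stay admissible, while an admissible set with no
   candidate outside it cannot lie strictly inside another admissible set;
   comparing sigmas, two saturated sets coincide.  For minimality, g(S) + dN is
   the minimum over x of a Lagrangian whose terms are convex in 1/x; at the
   saturated S the tangents at 1/sigma(S) have slopes summing to zero, so adding
   the tangent inequalities bounds the Lagrangian of any admissible T below. *)

From HB Require Import structures.
From mathcomp Require Import all_boot all_order all_algebra.
From mathcomp Require Import reals exp.
From mathcomp Require Import ring lra zify.
From Stdlib Require Import Wf_nat Inclusion.
Set Implicit Arguments. Unset Strict Implicit. Unset Printing Implicit Defensive.
Import Order.TTheory GRing.Theory Num.Theory.
Local Open Scope ring_scope.

Lemma acc_card_lt (T : finType) (r : {set T} -> {set T} -> Prop) :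
  (forall A B, r A B -> #|A| < #|B|)%N -> forall A, Acc (fun B A => r A B) A.
Proof.
move=> r_card A; apply: (@Acc_incl _ _ (ltof _ (fun B : {set T} => #|T| - #|B|)%N)).
  by move=> B C /r_card lt_CB; rewrite /ltof; have := max_card B; lia.
exact: well_founded_ltof.
Qed.

Definition phi (R : realType) (a b x : R) : R := a * ln x + b / x.

Lemma phiD (R : realType) (a b a' b' x : R) :
  phi a b x + phi a' b' x = phi (a + a') (b + b') x.
Proof. by rewrite /phi; ring. Qed.

Lemma phi_sum (R : realType) (I : finType) (P : pred I) (a b : I -> R) (x : R) :
  \sum_(i | P i) phi (a i) (b i) x = phi (\sum_(i | P i) a i) (\sum_(i | P i) b i) x.
Proof. by rewrite /phi big_split /= -!mulr_suml. Qed.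

Lemma phi_ratio (R : realType) (a b : R) : a != 0 -> b != 0 ->
  phi a b (b / a) = a * (ln (b / a) + 1).
Proof. by move=> a0 b0; rewrite /phi invf_div mulrCA divff // mulr1 mulrDr mulr1. Qed.

Lemma ln_le_sub1 (R : realType) (z : R) : 0 < z -> ln z <= z - 1.
Proof. by move=> z0; have := @le_ln1Dx R (z - 1); rewrite [1 + _]addrC subrK; apply; lra. Qed.

(* [phi a b] is convex as a function of [1/x]; this is its tangent at [1/s]. *)
Lemma phi_tangent (R : realType) (a b s x : R) : 0 <= a -> 0 < s -> 0 < x ->
  phi a b s + (b - a * s) * (x^-1 - s^-1) <= phi a b x.
Proof.
move=> a0 s0 x0; rewrite -subr_ge0.
have -> : phi a b x - (phi a b s + (b - a * s) * (x^-1 - s^-1))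
          = a * (s / x - 1 - ln (s / x)).
  by rewrite /phi ln_div ?posrE //; field; rewrite ?gt_eqF.
by rewrite mulr_ge0 // subr_ge0 ln_le_sub1 // divr_gt0.
Qed.

Lemma phi_ratio_le (R : realType) (a b x : R) : 0 < a -> 0 < b -> 0 < x ->
  phi a b (b / a) <= phi a b x.
Proof.
move=> a0 b0 x0; have := phi_tangent b (ltW a0) (divr_gt0 b0 a0) x0.
by rewrite mulrCA divff ?gt_eqF // mulr1 subrr mul0r addr0.
Qed.

Section Saturation.
Variables (R : realType) (K : nat) (F D : R) (l g : 'I_K -> R).
Hypothesis g_gt0 : forall k, 0 < g k.
Hypothesis l_gt0 : forall k, 0 < l k.
Hypothesis D_gt_sum : 0 < D - \sum_k g k.
Implicit Types (S T : {set 'I_K}) (k : 'I_K).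

Definition sigma (S : {set 'I_K}) : R :=
  (F - \sum_(k in S) l k) / (D - \sum_(k in S) g k).

Definition ratio (k : 'I_K) : R := l k / g k.

Definition admissible (S : {set 'I_K}) : Prop :=
  forall k, k \in S -> sigma S <= ratio k.

Definition no_candidate (S : {set 'I_K}) : Prop :=
  forall k, k \notin S -> ratio k < sigma S.

Definition objective (S : {set 'I_K}) : R :=
  (D - \sum_(k in S) g k) * ln (sigma S) + \sum_(k in S) g k * ln (ratio k).

Lemma sigma_den_gt0 S : 0 < D - \sum_(k in S) g k.
Proof.
apply: lt_le_trans D_gt_sum _; rewrite lerD2l lerN2 [leRHS](bigID [in S]) /= lerDl.
by apply: sumr_ge0 => k _; apply: ltW.
Qed.

Lemma mulr_sigma S : (D - \sum_(k in S) g k) * sigma S = F - \sum_(k in S) l k.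
Proof. by rewrite mulrC divfK // gt_eqF // sigma_den_gt0. Qed.

Lemma ratio_le x k : (ratio k <= x) = (l k <= x * g k).
Proof. exact: ler_pdivrMr. Qed.

Lemma sigma_subset_diff S T : S \subset T ->
  (D - \sum_(k in T) g k) * (sigma T - sigma S)
  = \sum_(k in T :\: S) (sigma S * g k - l k).
Proof.
move=> sST; rewrite mulrBr mulr_sigma sumrB -mulr_sumr.
have eS := mulr_sigma S; rewrite !(big_setID (A := T) S) (setIidPr sST) /=.
rewrite -[F](subrK (\sum_(k in S) l k)) -eS; ring.
Qed.

Lemma sigma_setU1_le S k : k \notin S -> sigma S <= ratio k ->
  sigma (k |: S) <= sigma S.
Proof.
move=> kS; rewrite /ratio ler_pdivlMr // => le_gl.
have := sigma_subset_diff (subsetUr [set k] S).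
rewrite setDUl setDv setU0 (setDidPl _) ?disjoints1 // big_set1 => e.
by rewrite -subr_le0 -(pmulr_rle0 _ (sigma_den_gt0 (k |: S))) e subr_le0.
Qed.

Lemma sigma_le_subset S T : S \subset T ->
  (forall k, k \in T :\: S -> ratio k <= sigma S) -> sigma S <= sigma T.
Proof.
move=> sST le_TS; rewrite -subr_ge0 -(pmulr_rge0 _ (sigma_den_gt0 T)) sigma_subset_diff //.
by apply: sumr_ge0 => k /le_TS; rewrite ratio_le subr_ge0.
Qed.

Lemma admissible_setU1 S k : admissible S -> k \notin S -> sigma S <= ratio k ->
  admissible (k |: S).
Proof.
move=> admS kS le_sk; have le_step := sigma_setU1_le kS le_sk.
move=> j; rewrite in_setU1 => /predU1P[-> | jS]; apply: le_trans le_step _ => //.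
exact: admS.
Qed.

Lemma no_candidate_subset S T : no_candidate S -> admissible T ->
  S \subset T -> T \subset S.
Proof.
move=> noS admT sST; apply/subsetP => k kT; apply/negPn/negP => kS.
have le_ST : sigma S <= sigma T.
  by apply: sigma_le_subset => // j; rewrite in_setD => /andP[/noS/ltW].
by have := lt_le_trans (noS k kS) le_ST; rewrite ltNge admT.
Qed.

Lemma saturated_eq S T : admissible S -> no_candidate S ->
  admissible T -> no_candidate T -> S = T.
Proof.
wlog le_ST : S T / sigma S <= sigma T.
  move=> wlog_ST admS noS admT noT.
  have [le_ST|/ltW lt_TS] := leP (sigma S) (sigma T); first exact: wlog_ST.
  by rewrite (wlog_ST T S).
move=> admS noS admT noT.
have sTS : T \subset S.
  apply/subsetP => k kT; apply/negPn/negP => kS.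
  by have := le_lt_trans (admT k kT) (noS k kS); rewrite ltNge le_ST.
by apply/eqP; rewrite eqEsubset sTS (no_candidate_subset noT admS sTS).
Qed.

Definition lagrangian_term S x k : R :=
  if k \in S then phi (g k) (l k) (ratio k) else phi (g k) (l k) x.

Definition lagrangian S x : R :=
  phi (D - \sum_k g k) (F - \sum_k l k) x + \sum_k lagrangian_term S x k.

Lemma lagrangianE S x : lagrangian S x =
  phi (D - \sum_(k in S) g k) (F - \sum_(k in S) l k) x
  + \sum_(k in S) phi (g k) (l k) (ratio k).
Proof.
rewrite /lagrangian [\sum_k lagrangian_term S x k](bigID [in S]) /=.
have -> : \sum_(k in S) lagrangian_term S x k = \sum_(k in S) phi (g k) (l k) (ratio k).
  by apply: eq_bigr => k kS; rewrite /lagrangian_term kS.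
have -> : \sum_(k | k \notin S) lagrangian_term S x k = \sum_(k | k \notin S) phi (g k) (l k) x.
  by apply: eq_bigr => k /negbTE kS; rewrite /lagrangian_term kS.
rewrite phi_sum addrCA phiD addrC [\sum_k g k](bigID [in S]) [\sum_k l k](bigID [in S]) /=.
by congr (phi _ _ _ + _); ring.
Qed.

Lemma lagrangian_term_tangent S T s t k : 0 < s -> 0 < t ->
  (k \in S -> s <= ratio k) -> (k \notin S -> ratio k < s) -> (k \in T -> t <= ratio k) ->
  lagrangian_term S s k + (if k \in S then 0 else l k - g k * s) * (t^-1 - s^-1)
  <= lagrangian_term T t k.
Proof.
move=> s0 t0 admS noS admT; have [gk lk] := (g_gt0 k, l_gt0 k).
rewrite /lagrangian_term; case: (boolP (k \in S)) => kS; case: (boolP (k \in T)) => kT.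
- by rewrite mul0r addr0.
- by rewrite mul0r addr0 phi_ratio_le.
- have slope_le0 : l k - g k * s <= 0.
    by rewrite subr_le0 mulrC -ratio_le; exact/ltW/noS.
  apply: le_trans _ (phi_tangent _ (ltW gk) s0 (divr_gt0 lk gk)).
  rewrite lerD2l ler_wnM2l // lerD2r lef_pV2 ?posrE ?divr_gt0 //; exact: admT.
- exact: phi_tangent (ltW gk) s0 t0.
Qed.

Hypothesis sigma_gt0 : forall S, 0 < sigma S.

Lemma lagrangian_sigma S : lagrangian S (sigma S) = objective S + D.
Proof.
have num_gt0 : 0 < F - \sum_(k in S) l k.
  by rewrite -mulr_sigma mulr_gt0 ?sigma_den_gt0 ?sigma_gt0.
rewrite lagrangianE /objective /sigma phi_ratio ?gt_eqF ?sigma_den_gt0 //.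
have -> : \sum_(k in S) phi (g k) (l k) (ratio k)
          = \sum_(k in S) (g k * ln (ratio k) + g k).
  by apply: eq_bigr => k _; rewrite /ratio phi_ratio ?gt_eqF // mulrDr mulr1.
by rewrite big_split /=; ring.
Qed.

Lemma lagrangian_le S T : admissible S -> no_candidate S -> admissible T ->
  lagrangian S (sigma S) <= lagrangian T (sigma T).
Proof.
move=> admS noS admT; set s := sigma S; set t := sigma T; set u := t^-1 - s^-1.
pose slope k := if k \in S then 0 else l k - g k * s.
have slopes0 : F - \sum_k l k - (D - \sum_k g k) * s + \sum_k slope k = 0.
  have -> : \sum_k slope k = \sum_(k | k \notin S) (l k - g k * s).
    by rewrite [RHS]big_mkcond; apply: eq_bigr => k _; rewrite /slope; case: (k \in S).
  have eS : (D - \sum_(k in S) g k) * s = F - \sum_(k in S) l k := mulr_sigma S.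
  rewrite sumrB -mulr_suml [\sum_k l k](bigID [in S]) [\sum_k g k](bigID [in S]) /=.
  lra.
have zero_slope : (F - \sum_k l k - (D - \sum_k g k) * s) * u + (\sum_k slope k) * u = 0.
  by rewrite -mulrDl slopes0 mul0r.
have base := phi_tangent (F - \sum_k l k) (ltW D_gt_sum) (sigma_gt0 S) (sigma_gt0 T).
rewrite -/s -/t -/u in base.
have terms : \sum_k lagrangian_term S s k + (\sum_k slope k) * u <= \sum_k lagrangian_term T t k.
  rewrite mulr_suml -big_split; apply: ler_sum => k _.
  by apply: lagrangian_term_tangent; rewrite ?sigma_gt0 //; [exact: admS | exact: noS | exact: admT].
rewrite /lagrangian; lra.
Qed.

Lemma objective_min S T : admissible S -> no_candidate S -> admissible T ->
  objective S <= objective T.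
Proof. by move=> admS noS admT; rewrite -(lerD2r D) -!lagrangian_sigma lagrangian_le. Qed.

End Saturation.

Lemma sum_gam (R : realType) (N K : nat) (rho : 'I_K -> 'I_N -> R) :
  (forall i, \sum_(k < K) rho k i = 1) -> \sum_k gam rho k = N%:R.
Proof.
move=> rho_sum1; rewrite /gam exchange_big /= (eq_bigr _ (fun i _ => rho_sum1 i)).
by rewrite sumr_const card_ord.
Qed.

Theorem mainTheorem6 (R : realType) (d N K : nat)
  (y : 'I_N -> 'cV[R]_d) (rho : 'I_K -> 'I_N -> R) (lam : 'I_K -> R) :
  (2 <= d)%N -> (1 <= N)%N -> (1 <= K)%N ->
  (forall k i, 0 <= rho k i) ->
  (forall i, \sum_(k < K) rho k i = 1) ->
  (forall k, is_largest_eigenvalue (Amat y rho k) (lam k)) ->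
  (forall k, 0 < gam rho k) ->
  (forall k, 0 < lam k) ->
  (forall S : {set 'I_K}, 0 < sigma2 y rho lam S) ->
  [/\ (* termination: no infinite run from the empty set *)
      Acc (fun S' S => step y rho lam S S') set0,
      (* every produced set lies in V *)
      (forall S, reachable y rho lam S -> inV y rho lam S) &
      (* every output is the unique saturated set and minimizes g over V *)
      (forall S, reachable y rho lam S -> candL y rho lam S = set0 ->
         [/\ saturated y rho lam S,
             (forall T, saturated y rho lam T -> T = S) &
             (forall T, inV y rho lam T -> gfun y rho lam S <= gfun y rho lam T)])].
Proof.
move=> d_ge2 N_ge1 _ _ rho_sum1 _ gam_gt0 lam_gt0 sigma2_gt0.
have gap_gt0 : 0 < (d * N)%:R - \sum_k gam rho k.
  by rewrite sum_gam // subr_gt0 ltr_nat ltn_Pmull.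
have reach_inV S : reachable y rho lam S -> inV y rho lam S.
  elim=> [k|S0 S1 _ admS0 [k]]; first by rewrite inE.
  by rewrite inE => /andP[kS le_sk] ->; apply: admissible_setU1.
split=> [|//|S reachS candS0].
  by apply: acc_card_lt => A B [k]; rewrite inE => /andP[kA _] ->; rewrite cardsU1 kA.
have noS : no_candidate (frob2 (dataY y)) (d * N)%:R lam (gam rho) S.
  move=> k kS; rewrite ltNge; apply/negP => le_sk.
  by have := in_set0 k; rewrite -candS0 inE kS le_sk.
have satS : saturated y rho lam S by split; [exact: reach_inV | exact: noS].
split=> // [T [admT noT] | T admT].
  exact: (saturated_eq gam_gt0 gap_gt0 admT noT (reach_inV S reachS) noS).
exact: (objective_min gam_gt0 lam_gt0 gap_gt0 sigma2_gt0 (reach_inV S reachS) noS admT).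
Qed.
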